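(* Let $S$ be a virtual flat biquandle and $C_n(S)$ the free abelian group on $n$-tuples of elements of $S$. Define $d_n:C_n(S)\to C_{n-1}(S)$ by $$d_n(a_1,\dots,a_n)=\sum_{i=1}^{n-1}(-1)^i\big((a_1,\dots,\widehat{a_i},\dots,a_n)-(a_1,\dots,\widehat{a_i},\dots,a_{n-1},a_n\circ a_i)\big),$$ where $\widehat{a_i}$ denotes omission of $a_i$. Then $d_{n-1}\circ d_n=0$ for all $n$.
   Context: A virtual flat biquandle is a set $S$ with two binary operations $a\ast b$, $a\circ b$; writing $S_b(a)=a\ast b$, $T_b(a)=a\circ b$, for all $a,b\in S$: (1) $S_aS_b=S_bS_a$, $T_aT_b=T_bT_a$, $S_aT_b=T_bS_a$; (2) $S_a=S_{T_b(a)}=S_{S_b(a)}$, $T_a=T_{S_b(a)}=T_{T_b(a)}$; (3) $T_aS_a=S_aT_a=\mathrm{id}$. *)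

From HB Require Import structures.
From mathcomp Require Import all_boot all_order all_algebra.
From mathcomp Require Import freeg.
Set Implicit Arguments. Unset Strict Implicit. Unset Printing Implicit Defensive.
Import Order.TTheory GRing.Theory Num.Theory.
Local Open Scope ring_scope.

(* Virtual flat biquandle: ast a b = a * b = S_b(a), circ a b = a o b = T_b(a). *)
Definition virtual_flat_biquandle (S : Type) (ast circ : S -> S -> S) : Prop :=
  (forall a b x, ast (ast x b) a = ast (ast x a) b) /\
  (forall a b x, circ (circ x b) a = circ (circ x a) b) /\
  (forall a b x, ast (circ x b) a = circ (ast x a) b) /\
  (forall a b x, ast x a = ast x (circ a b) /\ ast x a = ast x (ast a b)) /\
  (forall a b x, circ x a = circ x (ast a b) /\ circ x a = circ x (circ a b)) /\
  (forall a x, circ (ast x a) a = x /\ ast (circ x a) a = x).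

Definition chains (S : choiceType) (n : nat) := {freeg (n.-tuple S) / int}.

Section Boundary.
Variables (S : choiceType) (circ : S -> S -> S) (n : nat).

(* For t = (a_1,...,a_{n+1}) and i : 'I_n (0-indexed, i.e. a_{i+1}):
   the tuple with a_{i+1} omitted. *)
Definition omit (t : (n.+1).-tuple S) (i : 'I_n) : n.-tuple S :=
  [tuple tnth t (fintype.lift (widen_ord (leqnSn n) i) j) | j < n].

(* the same tuple, with its last entry a_{n+1} replaced by a_{n+1} o a_{i+1} *)
Definition omit_circ (t : (n.+1).-tuple S) (i : 'I_n) : n.-tuple S :=
  [tuple (if val j == n.-1
          then circ (tnth t (fintype.lift (widen_ord (leqnSn n) i) j))
                    (tnth t (widen_ord (leqnSn n) i))
          else tnth t (fintype.lift (widen_ord (leqnSn n) i) j)) | j < n].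

(* d_{n+1} on generators: paper's index i ranges over 1..n, here i+1 for i : 'I_n *)
Definition bd_gen (t : (n.+1).-tuple S) : chains S n :=
  \sum_(i < n) ((-1) ^+ i.+1 : int) *: (<< omit t i >> - << omit_circ t i >>).

Definition bd : chains S n.+1 -> chains S n := fglift bd_gen.
End Boundary.

From HB Require Import structures.
From mathcomp Require Import all_boot all_order all_algebra.
From mathcomp Require Import freeg zify.
Set Implicit Arguments. Unset Strict Implicit. Unset Printing Implicit Defensive.
Import GRing.Theory Num.Theory.
Local Open Scope ring_scope.

(** Write [d_i^0 t] for [t]
    with its entry of index [i] omitted, and [d_i^1 t] for the same tuple with
    its last entry [b] replaced by [b o a_i].  Because the [T_a] commute, these
    faces satisfy the simplicial identity [d_j^e d_i^e' = d_i^e' d_(j+1)^e] for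
    [i <= j].  Hence in [d (d t) = sum_(i,j) (-1)^(i+j) (d_j^0 - d_j^1)(d_i^0 - d_i^1) t]
    the terms indexed by [(i, j)] and [(j+1, i)] are equal with opposite signs,
    and the involution exchanging them shows that [d (d t)] is its own opposite. *)

Lemma bump_bump i j k : (i <= j)%N -> bump i (bump j k) = bump j.+1 (bump i k).
Proof. by move=> le_ij; rewrite /bump; do 4?case: leqP => ? /=; lia. Qed.

Lemma sum_sign_reversing_involution (T : finType) (V : zmodType) (f : T -> T) (F : T -> V) :
  involutive f -> (forall t, F (f t) = - F t) -> (\sum_t F t) *+ 2 = 0.
Proof.
move=> fK FN; rewrite mulr2n {1}(reindex_inj (inv_inj fK)) -big_split /=.
by rewrite big1 // => t _; rewrite FN addNr.
Qed.

Lemma chains_double_eq0 (S : choiceType) n (c : chains S n) : c *+ 2 = 0 -> c = 0.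
Proof.
move=> c2; apply/eqP/freeg_eqP => z; rewrite coeff0.
by apply/eqP; have /eqP := congr1 (coeff z) c2; rewrite coeffMn coeff0 mulrn_eq0.
Qed.

(* [(i, j) |-> (j+1, i)] when [i <= j], and its inverse otherwise. *)
Definition face_pair_swap n (p : 'I_n.+1 * 'I_n) : 'I_n.+1 * 'I_n :=
  if (p.1 <= p.2)%N then (inord p.2.+1, insubd p.2 (p.1 : nat))
  else (inord p.2, insubd p.2 (p.1 : nat).-1).

Lemma face_pair_swap_le n (i : 'I_n.+1) (j : 'I_n) : (i <= j)%N ->
  (face_pair_swap (i, j)).1 = j.+1 :> nat /\ (face_pair_swap (i, j)).2 = i :> nat.
Proof.
move=> le_ij; have lt_jn := ltn_ord j.
by rewrite /face_pair_swap /= le_ij inordK ?val_insubd; [rewrite ifT //; lia | lia].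
Qed.

Lemma face_pair_swap_gt n (i : 'I_n.+1) (j : 'I_n) : (j < i)%N ->
  (face_pair_swap (i, j)).1 = j :> nat /\ (face_pair_swap (i, j)).2 = i.-1 :> nat.
Proof.
move=> lt_ji; have lt_jn := ltn_ord j; have lt_in := ltn_ord i.
rewrite /face_pair_swap /= leqNgt lt_ji inordK ?val_insubd; [rewrite ifT //; lia | lia].
Qed.

Lemma face_pair_swapK n : involutive (@face_pair_swap n).
Proof.
case=> i j; case: (leqP i j) => [le_ij | lt_ji].
- case: (face_pair_swap_le le_ij); case: face_pair_swap => a b /= ea eb.
  have lt_ba : (b < a)%N by lia.
  case: (face_pair_swap_gt lt_ba); case: face_pair_swap => c d /= ec ed.
  by congr pair; apply: val_inj => /=; lia.
- case: (face_pair_swap_gt lt_ji); case: face_pair_swap => a b /= ea eb.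
  have le_ab : (a <= b)%N by lia.
  case: (face_pair_swap_le le_ab); case: face_pair_swap => c d /= ec ed.
  by congr pair; apply: val_inj => /=; lia.
Qed.

Definition alt_sign (k : nat) : int := (-1) ^+ k.+1.

Lemma alt_signM a b : alt_sign a * alt_sign b = (-1) ^+ (a + b).
Proof. by rewrite -exprD addSn addnS !exprS !mulN1r opprK. Qed.

Section Faces.
Variables (S : choiceType) (circ : S -> S -> S).
Hypothesis circC : forall a b x, circ (circ x b) a = circ (circ x a) b.

Definition face n (e : bool) (t : n.+1.-tuple S) (i : 'I_n) : n.-tuple S :=
  if e then omit_circ circ t i else omit t i.

Lemma nth_face x0 n e (t : n.+1.-tuple S) (i : 'I_n) m : (m < n)%N ->
  nth x0 (face e t i) m =
  if e && (m == n.-1) then circ (nth x0 t (bump i m)) (nth x0 t i)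
  else nth x0 t (bump i m).
Proof.
move=> lt_mn; rewrite -[m]/(val (Ordinal lt_mn)) -tnth_nth.
by case: e; rewrite /face /omit_circ /omit tnth_mktuple /= !(tnth_nth x0).
Qed.

Lemma face_face n (e e' : bool) (t : n.+2.-tuple S) (i : 'I_n.+1) (j : 'I_n)
    (i' : 'I_n) (j1 : 'I_n.+1) :
  (i <= j)%N -> i' = i :> nat -> j1 = j.+1 :> nat ->
  face e (face e' t i) j = face e' (face e t j1) i'.
Proof.
move=> le_ij ei' ej1; apply: eq_from_tnth => k; have x0 := tnth t ord0.
rewrite !(tnth_nth x0); have lt_kn := ltn_ord k; have lt_jn := ltn_ord j.
rewrite !nth_face ?ei' ?ej1 //; try by rewrite /bump; case: leqP => ? /=; lia.
have bump_last h : (h < n)%N -> (bump h k == n) = (k == n.-1 :> nat).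
  by move=> lt_hn; rewrite /bump; case: leqP => ? /=; apply/eqP/eqP; lia.
have bump_ij : bump i j = j.+1 by rewrite /bump; case: leqP => ? /=; lia.
have bump_ji : bump j.+1 i = i by rewrite /bump; case: leqP => ? /=; lia.
have [ne_jn ne_in] : j != n :> nat /\ i != n :> nat by split; apply/eqP; lia.
rewrite /= !bump_last ?(leq_ltn_trans le_ij) // (bump_bump _ le_ij) bump_ij bump_ji.
rewrite (negbTE ne_jn) (negbTE ne_in) !andbF.
by case: (k == n.-1 :> nat) e e' => [] [] [] //=; rewrite circC.
Qed.

Definition face_square n (t : n.+2.-tuple S) (i : 'I_n.+1) (j : 'I_n) : chains S n :=
  << face false (face false t i) j >> - << face true (face false t i) j >>
  - << face false (face true t i) j >> + << face true (face true t i) j >>.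

Lemma face_square_swap n (t : n.+2.-tuple S) (i : 'I_n.+1) (j : 'I_n)
    (i' : 'I_n) (j1 : 'I_n.+1) :
  (i <= j)%N -> i' = i :> nat -> j1 = j.+1 :> nat ->
  face_square t i j = face_square t j1 i'.
Proof.
move=> le_ij ei' ej1; rewrite /face_square !(face_face _ _ _ le_ij ei' ej1).
by rewrite -!addrA; congr (_ + _); rewrite addrCA.
Qed.

Definition signed_face_square n (t : n.+2.-tuple S) (p : 'I_n.+1 * 'I_n) :=
  alt_sign p.1 * alt_sign p.2 *: face_square t p.1 p.2.

Lemma signed_face_square_swap n (t : n.+2.-tuple S) (p : 'I_n.+1 * 'I_n) :
  signed_face_square t (face_pair_swap p) = - signed_face_square t p.
Proof.
set F := signed_face_square t.
suff le_case (i : 'I_n.+1) (j : 'I_n) :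
    (i <= j)%N -> F (face_pair_swap (i, j)) = - F (i, j).
  case: p => i j; case: (leqP i j) => [/le_case // | lt_ji].
  case: (face_pair_swap_gt lt_ji) (face_pair_swapK (i, j)).
  case: face_pair_swap => a b /= ea eb swapK.
  by rewrite -[in RHS]swapK le_case ?opprK //=; lia.
move=> le_ij; case: (face_pair_swap_le le_ij) => e1 e2.
rewrite /F /signed_face_square !alt_signM -(face_square_swap t le_ij e2 e1) e1 e2.
by rewrite addSn exprS mulN1r addnC scaleNr.
Qed.

HB.instance Definition _ n :=
  GRing.isZmodMorphism.Build (chains S n.+1) (chains S n) (@bd S circ n)
    (lift_is_additive _).

Lemma bdZ n (k : int) (c : chains S n.+1) : bd circ (k *: c) = k *: bd circ c.
Proof. by rewrite -[k in LHS]intz scaler_int raddfMz -scaler_int intz. Qed.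

Lemma bdU n (k : int) (t : n.+1.-tuple S) : bd circ << k *g t >> = k *: bd_gen circ t.
Proof. exact: liftU. Qed.

Lemma bd_bd_gen n (t : n.+2.-tuple S) :
  bd circ (bd_gen circ t) =
  \sum_(p : 'I_n.+1 * 'I_n) signed_face_square t p.
Proof.
rewrite /bd_gen raddf_sum -(pair_bigA _ (fun i j => signed_face_square t (i, j))) /=.
apply: eq_bigr => i _.
rewrite bdZ raddfB /= !bdU !scale1r /bd_gen -sumrB scaler_sumr; apply: eq_bigr => j _.
by rewrite /signed_face_square /= -scalerA -scalerBr /face_square /face opprB addrA addrAC.
Qed.

Lemma bd_bd_gen_eq0 n (t : n.+2.-tuple S) : bd circ (bd_gen circ t) = 0.
Proof.
apply: chains_double_eq0; rewrite bd_bd_gen.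
exact: sum_sign_reversing_involution (@face_pair_swapK n) (signed_face_square_swap t).
Qed.

Lemma bd_bd n (c : chains S n.+2) : bd circ (bd circ c) = 0.
Proof.
rewrite -(freeg_sumE c) !raddf_sum big1 // => z _.
by rewrite /= bdU bdZ bd_bd_gen_eq0 scaler0.
Qed.

End Faces.

Theorem lemma5p3 (S : choiceType) (ast circ : S -> S -> S)
  (hS : virtual_flat_biquandle ast circ) (n : nat) (x : chains S n.+2) :
  @bd S circ n (@bd S circ n.+1 x) = 0.
Proof.
have [_ [circC _]] := hS.
exact: (bd_bd circC x).
Qed.
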